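(* Fix $p \in (0,1)$ and $r \in (0,1)$. For each positive integer $k$, let $n_k > 0$ be a number satisfying \[ I_{1-p}(n_k, k+1) = r, \] where $I_z(a,b)$ denotes the regularized incomplete beta function. Then $\frac{n_k}{k}$ tends to a limit as $k \to \infty$ which does not depend on $r$, namely \[ \lim_{k \to \infty} \frac{n_k}{k} = \frac{1}{p} - 1 . \]
   Context: The regularized incomplete beta function is $I_z(a,b) = \frac{\int_0^z t^{a-1}(1-t)^{b-1}\,dt}{\int_0^1 t^{a-1}(1-t)^{b-1}\,dt}$ for $z\in[0,1]$, $a,b>0$. For positive integers $n,k$ one has $I_{1-p}(n,k+1) = \sum_{x=0}^{k} \binom{n+k}{x} p^x (1-p)^{n+k-x}$, i.e. the probability that at most $k$ of $n+k$ independent nodes, each failing with probability $p$, fail. In the paper's setting $n$ is the number of critical nodes of a virtual infrastructure, $k$ the number of backup nodes, $p$ the independent per-node failure probability, and $r$ the reliability guarantee. *)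

From HB Require Import structures.
From mathcomp Require Import all_boot all_order all_algebra.
From mathcomp Require Import all_classical all_reals all_analysis.
Set Implicit Arguments. Unset Strict Implicit. Unset Printing Implicit Defensive.
Import Order.TTheory GRing.Theory Num.Theory.
Import numFieldNormedType.Exports.
Local Open Scope classical_set_scope.
Local Open Scope ring_scope.

Definition beta_integral (R : realType) (z a b : R) : R :=
  Rintegral (@lebesgue_measure R) `[0%R, z]%classic
    (fun t => t `^ (a - 1) * (1 - t) `^ (b - 1)).

Definition reg_inc_beta (R : realType) (z a b : R) : R :=
  beta_integral z a b / beta_integral 1 a b.

From HB Require Import structures.
From mathcomp Require Import all_boot all_order all_algebra.
From mathcomp Require Import all_classical all_reals all_analysis.
From mathcomp Require Import measurable_realfun lra ring.
Set Implicit Arguments.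
Unset Strict Implicit.
Unset Printing Implicit Defensive.

Import Order.TTheory GRing.Theory Num.Theory.
Import numFieldNormedType.Exports.
Local Open Scope classical_set_scope.
Local Open Scope ring_scope.

(* Write q = 1 - p and K = k.  The integrand t^(n-1) (1-t)^K of I_q(n, K+1) is
   unimodal with mode (n-1)/(n-1+K).  If (n-1) p >= K (q + e), the mode lies a
   fixed distance to the right of q: the integrand stays below its value at q on
   [0, q], but exceeds that value by a factor exp(c K) on a fixed interval to the
   right of q, so the mass to the right of q eventually outweighs r/(1-r) times
   the mass to its left and I_q(n, K+1) = r becomes impossible.  Symmetrically
   (n-1) p <= K (q - e) is impossible for large K, hence (n_k - 1) p / k -> q,
   i.e. n_k / k -> 1/p - 1. *)

Section log_ratio.
Variable R : realType.
Implicit Types al be q s t x y : R.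

Lemma mulr_lnB_le x y : 0 < x -> 0 < y -> y * (ln x - ln y) <= x - y.
Proof.
move=> x0 y0; have xy0 : 0 < x / y by rewrite divr_gt0.
rewrite -ln_div ?posrE //.
have := le_ln1Dx (x := x / y - 1) ltac:(lra).
rewrite addrCA subrr addr0 -(ler_pM2l y0) => /le_trans; apply.
by rewrite mulrBr mulrCA divff ?mulr1 ?lt0r_neq0.
Qed.

Lemma subr_le_mulr_lnB x y : 0 < x -> 0 < y -> x - y <= x * (ln x - ln y).
Proof.
move=> x0 y0; have := mulr_lnB_le y0 x0.
rewrite -[x * _]opprK -mulrN opprB; lra.
Qed.

Definition log_ratio al be q t :=
  al * (ln t - ln q) + be * (ln (1 - t) - ln (1 - q)).

Lemma log_ratio_reflect al be q t :
  log_ratio al be q t = log_ratio be al (1 - q) (1 - t).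
Proof. by rewrite /log_ratio !subKr addrC. Qed.

Lemma log_ratio_le0 al be q t : 0 <= al -> 0 <= be -> 0 < t <= q -> q < 1 ->
  be * q <= al * (1 - q) -> log_ratio al be q t <= 0.
Proof.
move=> al0 be0 /andP[t0 tq] q1 hmode.
have hX := mulr_lnB_le t0 (lt_le_trans t0 tq).
have hY := @mulr_lnB_le (1 - t) (1 - q) ltac:(lra) ltac:(lra).
have h1 : al * (1 - q) * (q * (ln t - ln q)) <= al * (1 - q) * (t - q).
  by apply: ler_wpM2l => //; nra.
have h2 : be * q * ((1 - q) * (ln (1 - t) - ln (1 - q))) <= be * q * (q - t).
  by apply: ler_wpM2l => //; nra.
have hsign : (q - t) * (be * q - al * (1 - q)) <= 0 by nra.
have pq0 : 0 < q * (1 - q) by nra.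
rewrite -(pmulr_rle0 _ pq0) /log_ratio; nra.
Qed.

(* When q lies below the mode al / (al + be), the log-ratio grows at least linearly
   to the right of q, with slope half the gap [al (1 - q) - be q]. *)
Lemma log_ratio_ge al be q s : 0 <= al -> 0 <= be -> 0 < q -> 0 < s -> q + s < 1 ->
  2 * s * (al + be) <= al * (1 - q) - be * q ->
  s * (al * (1 - q) - be * q) / 2 <= log_ratio al be q (q + s).
Proof.
move=> al0 be0 q0 s0 qs1 hgap.
set t := q + s; set d := al * (1 - q) - be * q in hgap *.
have hX : s <= t * (ln t - ln q).
  by have := @subr_le_mulr_lnB t q ltac:(rewrite /t; lra) q0; rewrite /t addrAC subrr add0r.
have hY : - s <= (1 - t) * (ln (1 - t) - ln (1 - q)).
  have := @subr_le_mulr_lnB (1 - t) (1 - q) ltac:(rewrite /t; lra) ltac:(lra).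
  by rewrite /t; congr (_ <= _); ring.
have h1 : al * (1 - t) * s <= al * (1 - t) * (t * (ln t - ln q)).
  by apply: ler_wpM2l => //; rewrite /t; nra.
have h2 : be * t * (- s) <= be * t * ((1 - t) * (ln (1 - t) - ln (1 - q))).
  by apply: ler_wpM2l => //; rewrite /t; nra.
have ht : 0 < t * (1 - t) <= 1 by apply/andP; split; rewrite /t; nra.
have hsum : t * (1 - t) * log_ratio al be q t =
    al * (1 - t) * (t * (ln t - ln q)) + be * t * ((1 - t) * (ln (1 - t) - ln (1 - q))).
  by rewrite /log_ratio; ring.
have hlin : al * (1 - t) * s + be * t * (- s) = s * (d - s * (al + be)).
  by rewrite /t /d; ring.
have hgap' : s * d / 2 <= s * (d - s * (al + be)).
  have -> : s * (d - s * (al + be)) = s * d / 2 + s * (d - 2 * s * (al + be)) / 2 by field.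
  rewrite lerDl.
  by apply: divr_ge0 => //; apply: mulr_ge0; lra.
have hlow : s * d / 2 <= t * (1 - t) * log_ratio al be q t.
  by rewrite hsum; apply: le_trans hgap' _; rewrite -hlin; exact: lerD h1 h2.
have hpos : 0 <= log_ratio al be q t.
  by rewrite -(pmulr_rge0 _ (proj1 (andP ht))); apply: le_trans hlow; nra.
by apply: le_trans hlow _; nra.
Qed.

Lemma log_ratio_homo_right al al' be q t : 0 < q <= t -> al <= al' ->
  log_ratio al be q t <= log_ratio al' be q t.
Proof.
move=> /andP[q0 qt] hal; rewrite /log_ratio lerD2r.
by apply: ler_wpM2r => //; rewrite subr_ge0 ler_ln ?posrE //; lra.
Qed.

Lemma log_ratio_homo_left al al' be q t : 0 < t <= q -> al <= al' ->
  log_ratio al' be q t <= log_ratio al be q t.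
Proof.
move=> /andP[t0 tq] hal; rewrite /log_ratio lerD2r.
by apply: ler_wnM2r => //; rewrite subr_le0 ler_ln ?posrE //; lra.
Qed.

End log_ratio.

Section beta_density.
Variable R : realType.
Implicit Types a b q e t : R.

Definition beta_density a b t : R := t `^ (a - 1) * (1 - t) `^ (b - 1).

Lemma beta_density_ge0 a b t : 0 <= beta_density a b t.
Proof. by rewrite mulr_ge0 // powR_ge0. Qed.

Lemma beta_density_gt0 a b t : 0 < t < 1 -> 0 < beta_density a b t.
Proof. by move=> /andP[t0 t1]; rewrite mulr_gt0 // powR_gt0 // subr_gt0. Qed.

Lemma measurable_beta_density a b : measurable_fun setT (beta_density a b).
Proof.
apply: measurable_funM; first exact: measurable_powR.
apply: (measurableT_comp (measurable_powR _)).
exact: measurable_funB.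
Qed.

Lemma beta_density_ratio a b q t : 0 < q < 1 -> 0 < t < 1 ->
  beta_density a b t = beta_density a b q * expR (log_ratio (a - 1) (b - 1) q t).
Proof.
move=> /andP[q0 q1] /andP[t0 t1].
have powRE x c : 0 < x -> x `^ c = expR (c * ln x) by move=> x0; rewrite /powR gt_eqF.
rewrite /beta_density !powRE ?subr_gt0 // -!expRD /log_ratio; congr expR; ring.
Qed.

Lemma beta_density_le_left a b q t : 0 < q < 1 -> 0 < b - 1 ->
  (b - 1) * q <= (a - 1) * (1 - q) -> 0 <= t <= q ->
  beta_density a b t <= beta_density a b q.
Proof.
move=> /andP[q0 q1] b1 hmode /andP[t0 tq].
have a1 : 0 < a - 1.
  have : 0 < (a - 1) * (1 - q) by apply: lt_le_trans hmode; exact: mulr_gt0.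
  by rewrite pmulr_lgt0 // subr_gt0.
have [->|tn0] := eqVneq t 0.
  by rewrite /beta_density powR0 ?gt_eqF // mul0r beta_density_ge0.
have t0' : 0 < t by rewrite lt0r tn0.
rewrite (beta_density_ratio a b (q := q) (t := t)) ?q0 ?t0' //; last lra.
rewrite ler_piMr ?beta_density_ge0 // expR_le1.
by apply: log_ratio_le0 => //; [lra | lra | rewrite t0'].
Qed.

Lemma beta_density_gain_right a b q e t : 0 < q < 1 -> 0 < b - 1 -> 0 < e <= 1 ->
  (b - 1) * (q + e) <= (a - 1) * (1 - q) ->
  q + e * (1 - q) / 8 <= t <= q + e * (1 - q) / 4 ->
  beta_density a b q * expR ((b - 1) * (e * (1 - q) / 8) * e / 2) <= beta_density a b t.
Proof.
move=> /andP[q0 q1] b1 /andP[e0 e1] hmode /andP[t1 t2].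
have ep0 : 0 < e * (1 - q) by apply: mulr_gt0; lra.
have ep1 : e * (1 - q) <= 1 - q by rewrite ler_piMl //; lra.
have -> : t = q + (t - q) by ring.
rewrite (beta_density_ratio _ _ (q := q) (t := q + (t - q))) ?q0 ?q1 //; last first.
  by apply/andP; split; lra.
rewrite ler_wpM2l ?beta_density_ge0 // ler_expR.
have s1 : e * (1 - q) / 8 <= t - q by lra.
have s2 : t - q <= e * (1 - q) / 4 by lra.
have qs1 : q + (t - q) < 1 by lra.
move: (t - q) (a - 1) (b - 1) s1 s2 qs1 hmode b1 => s A K s1 s2 qs1 hmode K0.
have A0 : 0 <= A by nra.
have hgap : K * e <= A * (1 - q) - K * q by lra.
apply: le_trans (log_ratio_ge _ _ _ _ _ _); try lra.
- have : e * (1 - q) / 8 * (K * e) <= s * (A * (1 - q) - K * q).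
    by apply: ler_pM; nra.
  lra.
- have h1 : (1 - e / 2) * (K * (q + e)) <= (1 - e / 2) * (A * (1 - q)).
    by apply: ler_wpM2l => //; lra.
  have h2 : 2 * s * (A + K) <= e * (1 - q) / 2 * (A + K).
    by apply: ler_wpM2r; lra.
  have h3 : 0 <= K * e * (1 - e) by apply: mulr_ge0; nra.
  lra.
Qed.

Lemma nonneg_majorant (x c z : R) : 0 <= c -> x * z <= c ->
  exists y, [/\ 0 <= y, x <= y & y * z <= c].
Proof.
move=> c0 hxz; case: (leP 0 x) => hx; first by exists x.
by exists 0; rewrite mul0r; split => //; exact: ltW.
Qed.

Lemma beta_density_le_right a b q t : 0 < q < 1 -> 0 < b - 1 ->
  (a - 1) * (1 - q) <= (b - 1) * q -> q <= t <= 1 ->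
  beta_density a b t <= beta_density a b q.
Proof.
move=> /andP[q0 q1] b1 hmode /andP[qt t1].
have [->|tn1] := eqVneq t 1.
  by rewrite /beta_density subrr powR0 ?gt_eqF // mulr0 beta_density_ge0.
have t1' : t < 1 by rewrite lt_neqAle tn1.
rewrite (beta_density_ratio _ _ (q := q) (t := t)) ?q0 ?q1 //; last by apply/andP; split; lra.
rewrite ler_piMr ?beta_density_ge0 // expR_le1.
have [A [A0 aA hA]] := nonneg_majorant (mulr_ge0 (ltW b1) (ltW q0)) hmode.
have hqt : 0 < q <= t by rewrite q0.
apply: le_trans (log_ratio_homo_right (b - 1) hqt aA) _.
rewrite log_ratio_reflect; apply: log_ratio_le0 => //; try lra.
Qed.

Lemma beta_density_gain_left a b q e t : 0 < q < 1 -> 0 < b - 1 -> 0 < e <= q / 2 ->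
  (a - 1) * (1 - q) <= (b - 1) * (q - e) ->
  q - e * (1 - q) / 4 <= t <= q - e * (1 - q) / 8 ->
  beta_density a b q * expR ((b - 1) * (e * (1 - q) / 8) * e / 2) <= beta_density a b t.
Proof.
move=> /andP[q0 q1] b1 /andP[e0 eq] hmode /andP[t1 t2].
have ep0 : 0 < e * (1 - q) by apply: mulr_gt0; lra.
have ep1 : e * (1 - q) <= e by rewrite ler_piMr //; lra.
rewrite (beta_density_ratio _ _ (q := q) (t := t)) ?q0 ?q1 //; last by apply/andP; split; lra.
rewrite ler_wpM2l ?beta_density_ge0 // ler_expR.
have qe0 : 0 <= q - e by lra.
have [A [A0 aA hA]] := nonneg_majorant (mulr_ge0 (ltW b1) qe0) hmode.
have htq : 0 < t <= q by apply/andP; split; lra.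
apply: le_trans (log_ratio_homo_left (b - 1) htq aA); rewrite log_ratio_reflect.
have -> : 1 - t = (1 - q) + (q - t) by ring.
have s1 : e * (1 - q) / 8 <= q - t by lra.
have s2 : q - t <= e * (1 - q) / 4 by lra.
have qs1 : 1 - q + (q - t) < 1 by lra.
move: (q - t) (b - 1) s1 s2 qs1 hA b1 => s K s1 s2 qs1 hA K0.
have hgap : K * e <= K * (1 - (1 - q)) - A * (1 - q) by lra.
apply: le_trans (log_ratio_ge _ _ _ _ _ _); try lra.
- have : e * (1 - q) / 8 * (K * e) <= s * (K * (1 - (1 - q)) - A * (1 - q)).
    by apply: ler_pM; nra.
  lra.
- have h1 : (1 + e / 2) * (A * (1 - q)) <= (1 + e / 2) * (K * (q - e)).
    by apply: ler_wpM2l => //; lra.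
  have h2 : 2 * s * (K + A) <= e * (1 - q) / 2 * (K + A).
    by apply: ler_wpM2r; lra.
  have h3 : 0 <= K * e * (1 + e) by apply: mulr_ge0; nra.
  lra.
Qed.

End beta_density.

Section mass_ratio.
Variable R : realType.
Notation mu := (@lebesgue_measure R).
Implicit Types (f : R -> R) (q r : R).

Definition mass_ratio f q :=
  Rintegral mu `[0%R, q]%classic f / Rintegral mu `[0%R, 1]%classic f.

Lemma lebesgue_measure_itv_lt (x y : bool) (u v : R) : u < v ->
  mu [set` Interval (BSide x u) (BSide y v)] = (v - u)%:E.
Proof. by move=> uv; rewrite lebesgue_measure_itv /= lte_fin uv EFinB. Qed.

Lemma integral_le_mul_measure (D : set R) f B : measurable D ->
  measurable_fun setT f -> (forall t, 0 <= f t) -> (forall t, D t -> f t <= B) ->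
  (\int[mu]_(x in D) (f x)%:E <= B%:E * mu D)%E.
Proof.
move=> mD mf f0 fB; rewrite -integral_cst //.
apply: ge0_le_integral => //.
- by move=> x _; rewrite lee_fin.
- by apply/measurable_EFinP; exact: measurable_funTS.
Qed.

Lemma mul_measure_le_integral (D J : set R) f L : measurable D -> measurable J ->
  J `<=` D -> measurable_fun setT f -> (forall t, 0 <= f t) -> 0 <= L ->
  (forall t, J t -> L <= f t) ->
  (L%:E * mu J <= \int[mu]_(x in D) (f x)%:E)%E.
Proof.
move=> mD mJ JD mf f0 L0 fL.
have hJD : (\int[mu]_(x in J) (f x)%:E <= \int[mu]_(x in D) (f x)%:E)%E.
  apply: ge0_subset_integral => //; first by apply/measurable_EFinP; exact: measurable_funTS.
  by move=> x _; rewrite lee_fin.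
apply: le_trans hJD; rewrite -integral_cst //.
apply: ge0_le_integral => //; apply/measurable_EFinP; exact: measurable_funTS.
Qed.

(* [Rintegral] is 0 on an infinite integral, so [r > 0] forces both pieces of the
   mass to be finite. *)
Lemma mass_ratio_balance f q r : measurable_fun setT f -> (forall t, 0 <= f t) ->
  0 <= q <= 1 -> 0 < r -> mass_ratio f q = r ->
  exists N M : R, [/\ (\int[mu]_(x in `[0%R, q]) (f x)%:E = N%:E)%E,
    (\int[mu]_(x in `]q, 1%R]) (f x)%:E = M%:E)%E & r * M = (1 - r) * N].
Proof.
move=> mf f0 /andP[q0 q1] r0 hr.
have hsplit : `[0%R, 1]%classic = `[0%R, q]%classic `|` `]q, 1]%classic :> set R.
  apply/seteqP; split => x /=; rewrite !in_itv /=.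
    by move=> /andP[x0 x1]; case: (leP x q) => xq; [left|right]; rewrite ?xq ?x0 ?x1.
  by move=> [/andP[x0 xq]|/andP[xq x1]]; apply/andP; split => //; lra.
have hdisj : [disjoint `[0%R, q]%classic & `]q, 1%R]%classic :> set R].
  rewrite disj_set2E; apply/eqP/seteqP; split => x //=; rewrite !in_itv /=.
  by move=> [/andP[_ a] /andP[b _]]; lra.
have hU : (\int[mu]_(x in `[0%R, 1%R]) (f x)%:E = \int[mu]_(x in `[0%R, q]) (f x)%:E +
    \int[mu]_(x in `]q, 1%R]) (f x)%:E)%E.
  rewrite hsplit; apply: ge0_integral_setU => //.
  - by apply/measurable_EFinP; exact: measurable_funTS.
  - by move=> x _; rewrite lee_fin.
have f0E x : (0 <= (f x)%:E)%E by rewrite lee_fin.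
have iN := @integral_ge0 _ _ _ mu `[0%R, q] (EFin \o f) (fun x _ => f0E x).
have iM := @integral_ge0 _ _ _ mu `]q, 1%R] (EFin \o f) (fun x _ => f0E x).
move: hr iN iM; rewrite /mass_ratio /Rintegral hU.
case: (\int[mu]_(x in `[0%R, q]) (f x)%:E)%E => [N| |] //;
  case: (\int[mu]_(x in `]q, 1%R]) (f x)%:E)%E => [M| |] //= hr;
  last 3 first.
- by move: r0; rewrite -hr invr0 mulr0 ltxx.
- by move: r0; rewrite -hr mul0r ltxx.
- by move: r0; rewrite -hr mul0r ltxx.
move=> _ _; exists N, M; split => //.
have NM0 : N + M != 0 by apply: contraTneq r0 => NM; rewrite -hr NM invr0 mulr0 ltxx.
by rewrite -hr; field.
Qed.

Lemma mass_ratio_gain_right f q r B L u v : measurable_fun setT f ->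
  (forall t, 0 <= f t) -> 0 < q < 1 -> 0 < r < 1 -> mass_ratio f q = r ->
  (forall t, 0 <= t <= q -> f t <= B) -> q < u < v -> v <= 1 -> 0 <= L ->
  (forall t, u <= t <= v -> L <= f t) -> r * (L * (v - u)) <= (1 - r) * (B * q).
Proof.
move=> mf f0 /andP[q0 q1] /andP[r0 r1] hr fB /andP[qu uv] v1 L0 fL.
have q01 : 0 <= q <= 1 by rewrite !ltW.
have [N [M [hN hM hbal]]] := mass_ratio_balance mf f0 q01 r0 hr.
have hNB : N <= B * q.
  have mu_q := lebesgue_measure_itv_lt true false q0; rewrite subr0 in mu_q.
  rewrite -lee_fin -hN EFinM -mu_q.
  by apply: integral_le_mul_measure => // t /=; rewrite in_itv.
have hLM : L * (v - u) <= M.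
  rewrite -lee_fin -hM EFinM -(lebesgue_measure_itv_lt true false uv).
  apply: mul_measure_le_integral => //.
  by move=> t /=; rewrite !in_itv /= => /andP[ut tv]; apply/andP; split; lra.
have := ler_wpM2l (ltW r0) hLM; have : (1 - r) * N <= (1 - r) * (B * q).
  by apply: ler_wpM2l => //; lra.
lra.
Qed.

Lemma mass_ratio_gain_left f q r B L u v : measurable_fun setT f ->
  (forall t, 0 <= f t) -> 0 < q < 1 -> 0 < r < 1 -> mass_ratio f q = r ->
  (forall t, q < t <= 1 -> f t <= B) -> 0 <= u < v -> v <= q -> 0 <= L ->
  (forall t, u <= t <= v -> L <= f t) -> (1 - r) * (L * (v - u)) <= r * (B * (1 - q)).
Proof.
move=> mf f0 /andP[q0 q1] /andP[r0 r1] hr fB /andP[u0 uv] vq L0 fL.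
have q01 : 0 <= q <= 1 by rewrite !ltW.
have [N [M [hN hM hbal]]] := mass_ratio_balance mf f0 q01 r0 hr.
have hMB : M <= B * (1 - q).
  rewrite -lee_fin -hM EFinM -(lebesgue_measure_itv_lt false false q1).
  by apply: integral_le_mul_measure => // t /=; rewrite in_itv.
have hLN : L * (v - u) <= N.
  rewrite -lee_fin -hN EFinM -(lebesgue_measure_itv_lt true false uv).
  apply: mul_measure_le_integral => //.
  by move=> t /=; rewrite !in_itv /= => /andP[ut tv]; apply/andP; split; lra.
have := ler_wpM2l (ltW r0) hMB; have : (1 - r) * (L * (v - u)) <= (1 - r) * N.
  by apply: ler_wpM2l => //; lra.
lra.
Qed.

End mass_ratio.

Section reg_inc_beta_mode.
Variable R : realType.
Implicit Types a K q r e : R.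

Lemma reg_inc_betaE a b q : reg_inc_beta q a b = mass_ratio (beta_density a b) q.
Proof. by []. Qed.

Lemma expR_gain_gt (s g w c : R) : 0 < s -> 0 < w -> c <= 1 -> 1 <= s * g * w ->
  c < s * expR g * w.
Proof.
move=> s0 w0 c1 hbig.
have : s * g * w < s * expR g * w.
  by rewrite ltr_pM2r // ltr_pM2l //; apply: lt_le_trans (expR_ge1Dx g); lra.
lra.
Qed.

Lemma reg_inc_beta_mode_lt a K q r e : 0 < q < 1 -> 0 < r < 1 -> 0 < e <= 1 ->
  0 < K -> reg_inc_beta q a (K + 1) = r ->
  1 <= r * (K * (e * (1 - q) / 8) * e / 2) * (e * (1 - q) / 8) ->
  (a - 1) * (1 - q) < K * (q + e).
Proof.
move=> hq hr he K0; set b := K + 1; have -> : K = b - 1 by rewrite addrK.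
rewrite reg_inc_betaE => hbeta hbig; rewrite ltNge; apply/negP => hmode.
have b1 : 0 < b - 1 by rewrite addrK.
have /andP[q0 q1] := hq; have /andP[e0 e1] := he; have /andP[r0 r1] := hr.
have ep0 : 0 < e * (1 - q) by apply: mulr_gt0; lra.
have ep1 : e * (1 - q) <= 1 - q by rewrite ler_piMl //; lra.
set B := beta_density a b q; set E := expR ((b - 1) * (e * (1 - q) / 8) * e / 2).
have B0 : 0 < B by apply: beta_density_gt0.
have hgain t : q + e * (1 - q) / 8 <= t <= q + e * (1 - q) / 4 -> B * E <= beta_density a b t.
  exact: beta_density_gain_right.
have hle t : 0 <= t <= q -> beta_density a b t <= B.
  by apply: beta_density_le_left => //; nra.
have uv : q < q + e * (1 - q) / 8 < q + e * (1 - q) / 4 by apply/andP; split; lra.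
have BE0 : 0 <= B * E by rewrite mulr_ge0 ?expR_ge0 // ltW.
have := mass_ratio_gain_right (measurable_beta_density a b) (@beta_density_ge0 _ a b)
  hq hr hbeta hle uv ltac:(lra) BE0 hgain.
have -> : q + e * (1 - q) / 4 - (q + e * (1 - q) / 8) = e * (1 - q) / 8 by lra.
move=> hmass.
have : r * E * (e * (1 - q) / 8) <= (1 - r) * q by rewrite -(ler_pM2l B0); lra.
apply/negP; rewrite -ltNge; apply: expR_gain_gt => //; [lra | nra].
Qed.

Lemma reg_inc_beta_mode_gt a K q r e : 0 < q < 1 -> 0 < r < 1 -> 0 < e <= q / 2 ->
  0 < K -> reg_inc_beta q a (K + 1) = r ->
  1 <= (1 - r) * (K * (e * (1 - q) / 8) * e / 2) * (e * (1 - q) / 8) ->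
  K * (q - e) < (a - 1) * (1 - q).
Proof.
move=> hq hr he K0; set b := K + 1; have -> : K = b - 1 by rewrite addrK.
rewrite reg_inc_betaE => hbeta hbig; rewrite ltNge; apply/negP => hmode.
have b1 : 0 < b - 1 by rewrite addrK.
have /andP[q0 q1] := hq; have /andP[e0 e1] := he; have /andP[r0 r1] := hr.
have ep0 : 0 < e * (1 - q) by apply: mulr_gt0; lra.
have ep1 : e * (1 - q) <= e by rewrite ler_piMr //; lra.
set B := beta_density a b q; set E := expR ((b - 1) * (e * (1 - q) / 8) * e / 2).
have B0 : 0 < B by apply: beta_density_gt0.
have hgain t : q - e * (1 - q) / 4 <= t <= q - e * (1 - q) / 8 -> B * E <= beta_density a b t.
  exact: beta_density_gain_left.
have hle t : q < t <= 1 -> beta_density a b t <= B.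
  move=> /andP[qt t1]; apply: beta_density_le_right => //; first by nra.
  by apply/andP; split; lra.
have uv : 0 <= q - e * (1 - q) / 4 < q - e * (1 - q) / 8 by apply/andP; split; lra.
have BE0 : 0 <= B * E by rewrite mulr_ge0 ?expR_ge0 // ltW.
have := mass_ratio_gain_left (measurable_beta_density a b) (@beta_density_ge0 _ a b)
  hq hr hbeta hle uv ltac:(lra) BE0 hgain.
have -> : q - e * (1 - q) / 8 - (q - e * (1 - q) / 4) = e * (1 - q) / 8 by lra.
move=> hmass.
have : (1 - r) * E * (e * (1 - q) / 8) <= r * (1 - q) by rewrite -(ler_pM2l B0); lra.
apply/negP; rewrite -ltNge; apply: expR_gain_gt => //; [lra | lra | nra].
Qed.

Lemma reg_inc_beta_mode_bounds a K q r e : 0 < q < 1 -> 0 < r < 1 -> 0 < e <= q / 2 ->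
  0 < K -> reg_inc_beta q a (K + 1) = r ->
  1 <= r * (1 - r) * (K * (e * (1 - q) / 8) * e / 2) * (e * (1 - q) / 8) ->
  K * (q - e) < (a - 1) * (1 - q) < K * (q + e).
Proof.
move=> hq hr he K0 hbeta hbig.
have /andP[q0 q1] := hq; have /andP[e0 e1] := he; have /andP[r0 r1] := hr.
have gain0 : 0 <= K * (e * (1 - q) / 8) * e / 2 * (e * (1 - q) / 8).
  by rewrite !mulr_ge0 ?divr_ge0 ?subr_ge0 // ltW.
have r2 := mulr_ge0 (mulr_ge0 (ltW r0) (ltW r0)) gain0.
have r1' : 0 <= 1 - r by lra.
have r2' := mulr_ge0 (mulr_ge0 r1' r1') gain0.
apply/andP; split.
- by apply: (reg_inc_beta_mode_gt (r := r)) => //; lra.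
- by apply: (reg_inc_beta_mode_lt (r := r)) => //; lra.
Qed.

End reg_inc_beta_mode.

Lemma dist_lt_of_mode_bounds (R : realType) (p e eps K a : R) :
  0 < p -> 0 < eps -> 0 < e -> e <= eps * p / 2 -> 2 / eps <= K ->
  K * ((1 - p) - e) < (a - 1) * p -> (a - 1) * p < K * ((1 - p) + e) ->
  `|(p^-1 - 1) - a / K| < eps.
Proof.
move=> p0 eps0 e0 he hK hlo hup.
have K0 : 0 < K by apply: lt_le_trans hK; rewrite divr_gt0.
have hK2 : 2 <= K * eps by rewrite -ler_pdivrMr.
have Kp0 : 0 < K * p by apply: mulr_gt0.
have hx : K * p * ((p^-1 - 1) - a / K) = K * (1 - p) - a * p.
  by field; rewrite !lt0r_neq0.
have hKe : K * e <= K * (eps * p / 2) by rewrite ler_pM2l.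
have hKp : 2 * p <= K * eps * p by rewrite ler_pM2r.
rewrite ltr_norml; apply/andP; split.
- by rewrite -(ltr_pM2l Kp0) hx; lra.
- by rewrite -(ltr_pM2l Kp0) hx; lra.
Qed.

Theorem theorem1 (R : realType) (p r : R) (n : nat -> R) :
  0 < p < 1 -> 0 < r < 1 ->
  (forall k : nat, (0 < k)%N ->
     0 < n k /\ reg_inc_beta (1 - p) (n k) (k.+1)%:R = r) ->
  (fun k : nat => n k / k%:R) @ \oo --> (p^-1 - 1).
Proof.
move=> /andP[p0 p1] hr hn; have /andP[r0 r1] := hr.
apply/cvgrPdist_lt => eps eps0.
have [e [e0 e_eps e_q]] : exists e : R, [/\ 0 < e, e <= eps * p / 2 & e <= (1 - p) / 2].
  exists (Num.min (eps * p) (1 - p) / 2); split.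
  - by rewrite divr_gt0 // lt_min mulr_gt0 // subr_gt0.
  - by rewrite ler_pM2r // ge_min lexx.
  - by rewrite ler_pM2r // ge_min lexx orbT.
pose c := r * (1 - r) * (e * p / 8 * e / 2 * (e * p / 8)).
have c0 : 0 < c by rewrite /c; repeat apply: mulr_gt0; lra.
near=> k.
have hk : 2 / eps < k%:R by near: k; exact: nbhs_infty_gtr.
have hcK : 1 < c * k%:R by rewrite -ltr_pdivrMl // mulr1; near: k; exact: nbhs_infty_gtr.
have hk0 : 0 < k%:R :> R by apply: lt_trans hk; rewrite divr_gt0.
have k0 : (0 < k)%N by rewrite -(ltr0n R).
have [_ hbeta] := hn k k0; rewrite -natr1 in hbeta.
have hq : 0 < 1 - p < 1 by apply/andP; split; lra.
have he : 0 < e <= (1 - p) / 2 by rewrite e0.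
have hbig : 1 <= r * (1 - r) * (k%:R * (e * (1 - (1 - p)) / 8) * e / 2) *
    (e * (1 - (1 - p)) / 8) by rewrite subKr; rewrite /c in hcK; lra.
have /andP[] := reg_inc_beta_mode_bounds hq hr he hk0 hbeta hbig.
rewrite subKr => hlo hup.
by apply: dist_lt_of_mode_bounds p0 eps0 e0 e_eps _ hlo hup; exact: ltW.
Unshelve. all: end_near.
Qed.
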